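(* There is a function $f:\mathbb{N}\to\mathbb{N}$ such that the following holds. Let $p$ be a prime, $P$ a finite $p$-group, $m$ a positive integer, and $A$ a $p'$-group of automorphisms of $P$. If $|[P,a]|\le m$ for every $a\in A$, then $|A|\le f(m)$ and $|[P,A]|\le f(m)$.
   Context: $[P,a]=\langle x^{-1}x^{a}: x\in P\rangle$ and $[P,A]=\langle x^{-1}x^{a}: x\in P, a\in A\rangle$. A $p'$-group is a finite group of order coprime to $p$. *)

From mathcomp Require Import all_boot all_fingroup all_solvable.
Set Implicit Arguments. Unset Strict Implicit. Unset Printing Implicit Defensive.
Local Open Scope group_scope.

(* [P, a] = < x^-1 x^a : x in P >, for an automorphism a of P given as a
   permutation of the ambient group type (x^a written a x). *)
Definition commAut (gT : finGroupType) (P : {set gT}) (a : {perm gT}) : {set gT} :=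
  <<[set x^-1 * a x | x in P]>>.

Definition commAutS (gT : finGroupType) (P : {set gT}) (A : {set {perm gT}}) : {set gT} :=
  <<[set x^-1 * (a : {perm gT}) x | x : gT in P, a : {perm gT} in A]>>.

From mathcomp Require Import all_boot all_fingroup all_solvable zify.
Set Implicit Arguments. Unset Strict Implicit. Unset Printing Implicit Defensive.
Local Open Scope group_scope.

(* In the semidirect product, A acts faithfully on P by conjugation and
   [P, A] is generated by the [P, a], so |[P, A]| <= m ^ |A| and it suffices
   to bound |A|. A group whose abelian subgroups have order at most k has
   order at most (k * k!) ^ (k + 1): its prime divisors are at most k, and
   each Sylow subgroup has a self-centralising normal abelian subgroup.
   So it suffices to bound an abelian A, by (m!) ^ m, via a descent: keep a
   subgroup K of A centralising a c-stable set W, an A-invariant D <= P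
   centralised by c in A, with P <= <W, D> and
   2 ^ j |[W, c] :&: D| <= |[W, c]|.  If b in K does not centralise D, then
   [D, b, b] <> 1 by coprimality; replacing D, K, W, c by C_D(b), C_K([D, b]),
   W u [D, b], c b costs an index at most m! in K, doubles the ratio and
   shrinks D.  Once K centralises D it centralises P, so K = 1 and
   |A| <= (m!) ^ j, while 2 ^ j <= |[P, c]| <= m. *)

Section GroupLemmas.

Variable gT : finGroupType.
Implicit Types (p j : nat) (b z : gT) (A D G K N T X : {group gT}).

Lemma p'elt_cent_commg_cent1 p X b :
    p.-group X -> b \in 'N(X) -> p^'.-elt b ->
  {in X, forall x, [~ x, b] \in 'C[b]} -> b \in 'C(X).
Proof.
move=> pX nXb p'b cXbb; apply/centP=> x Xx; set y := [~ x, b].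
have Xy : y \in X by rewrite /y commgEl groupM ?groupV ?memJ_norm.
have yb : y ^ b = y by apply/conjg_fixP/commgP/cent1P/cXbb.
have xbk k : x ^ (b ^+ k) = x * y ^+ k.
  elim: k => [|k IHk]; first by rewrite expg0 conjg1 mulg1.
  by rewrite expgSr conjgM IHk conjMg conjXg yb conjg_mulR expgS [RHS]mulgA.
have y_b1 : y ^+ #[b] = 1.
  by apply: (mulgI x); rewrite mulg1 -xbk expg_order conjg1.
have y1 : y = 1.
  apply/eqP; rewrite -order_eq1; apply/eqP/(@pnat_1 p).
  - exact: mem_p_elt pX Xy.
  - by apply: pnat_dvd p'b; rewrite order_dvdn y_b1.
by apply/commute_sym/commgP; rewrite -/y y1.
Qed.

Lemma exists_commg_noncent1 p D b : p.-group D -> b \in 'N(D) -> p^'.-elt b ->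
  b \notin 'C(D) -> exists2 x, x \in [~: D, <[b]>] & [~ x, b] \notin 'C[b].
Proof.
move=> pD nDb p'b ncDb; set N := [~: D, <[b]>].
have sND : N \subset D by rewrite commg_subl cycle_subG.
have nNb : b \in 'N(N) by rewrite -cycle_subG commg_normr.
apply/exists_inP; apply: contraR ncDb => /exists_inPn ncNbb.
have cNb : b \in 'C(N).
  apply: p'elt_cent_commg_cent1 (pgroupS sND pD) nNb p'b _.
  by move=> x /ncNbb/negbNE.
apply: p'elt_cent_commg_cent1 pD nDb p'b _ => x Dx.
by apply/cent1P/commute_sym/(centP cNb); rewrite mem_commg ?cycle_id.
Qed.

Lemma coprime_commg_cent_mul A G : A \subset 'N(G) -> coprime #|G| #|A| ->
  solvable G -> G \subset [~: G, A] * 'C_G(A).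
Proof.
move=> nGA coGA solG; have sRG : [~: G, A] \subset G by rewrite commg_subl.
have nRA : A \subset 'N([~: G, A]) by rewrite commg_normr.
rewrite -quotientSK ?commg_norml // coprime_quotient_cent //.
by rewrite subsetI subxx quotient_cents2r.
Qed.

Lemma commg_cycle G b : b \in 'N(G) -> [~: G, <[b]>] = [~: G, [set b]].
Proof.
move=> nGb; apply/eqP.
rewrite eqEsubset [X in _ && X]commgS ?sub1set ?cycle_id // andbT.
set R := [~: G, [set b]].
have nRb : b \in 'N(R) by rewrite -sub1set normsR ?sub1set ?cent1id.
rewrite -quotient_cents2 ?cycle_subG ?commg_norml // quotient_cycle //.
by rewrite cent_cycle -cent_set1 -quotient_set1 ?quotient_cents2r.
Qed.

Lemma index_cent_leq_fact K N : K \subset 'N(N) -> #|K : 'C_K(N)| <= #|N|`!.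
Proof.
move=> nNK; have -> : #|K : 'C_K(N)| = #|conj_aut N @* K|.
  by rewrite card_morphim ker_conj_aut indexgI (setIidPr nNK) -indexgI.
rewrite -card_perm.
apply: leq_trans (subset_leq_card (Aut_conj_aut N K)) _.
by apply/subset_leq_card/subsetP=> a /setIdP[].
Qed.

Lemma card_setI_halving D (D' : {group gT}) T (T' : {group gT}) j z :
    T \subset T' -> D' \subset D -> z \in T' :&: D -> z \notin D' ->
  2 ^ j * #|T :&: D| <= #|T| -> 2 ^ j.+1 * #|T' :&: D'| <= #|T'|.
Proof.
move=> sTT' sD'D T'Dz D'z leT.
have halfD : 2 * #|T' :&: D'| <= #|T' :&: D|.
  have sI : T' :&: D' \subset T' :&: D by rewrite setIS.
  rewrite -(Lagrange sI) mulnC leq_pmul2l ?cardG_gt0 // indexg_gt1.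
  by apply/subsetPn; exists z; rewrite // inE negb_and D'z orbT.
(* T * (T' :&: D) lies in T', and meets T' :&: D in T :&: D. *)
have ratio : #|T| * #|T' :&: D| <= #|T'| * #|T :&: D|.
  rewrite (mul_cardG T (T' :&: D)%G) /= setIA (setIidPl sTT') leq_mul2r.
  by rewrite subset_leq_card ?orbT // mul_subG // subsetIl.
rewrite -(@leq_pmul2r #|T :&: D|) ?cardG_gt0 //; apply: leq_trans ratio.
rewrite (_ : (_ * _ * _ = 2 ^ j * #|T :&: D| * (2 * #|T' :&: D'|))%N).
  exact: leq_mul leT halfD.
by rewrite expnS; lia.
Qed.

End GroupLemmas.

Section AbelianCoprimeAction.

Variables (gT : finGroupType) (p : nat) (P B : {group gT}) (m : nat).
Hypotheses (pP : p.-group P) (p'B : p^'.-group B) (cBB : abelian B).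
Hypotheses (nPB : B \subset 'N(P)) (faithB : 'C_B(P) = 1).
Hypothesis commB : forall c, c \in B -> #|[~: P, <[c]>]| <= m.

Record descent (D K : {group gT}) (W : {set gT}) (c : gT) (j : nat) : Prop :=
  Descent {
    descent_subP : D \subset P;
    descent_norm : B \subset 'N(D);
    descent_subB : K \subset B;
    descent_card : #|B| <= #|K| * m`! ^ j;
    descent_subW : W \subset P;
    descent_centW : K \subset 'C(W);
    descent_memc : c \in B;
    descent_stableW : {in W, forall w, w ^ c \in W};
    descent_centD : c \in 'C(D);
    descent_commg : 2 ^ j * #|[~: W, [set c]] :&: D| <= #|[~: W, [set c]]|;
    descent_gen : P \subset <<W :|: D>>
  }.

Lemma descent_init : descent P B set0 1 0.
Proof.
split; rewrite ?expn0 ?muln1 ?mul1n ?sub0set ?subsetIl ?subxx ?group1 //.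
- exact: subset_trans (cents1 B) (centS (sub0set _)).
- by move=> w; rewrite inE.
- by rewrite subset_leq_card ?subsetIl.
- by rewrite set0U genGid.
Qed.

Lemma descent_stop D K W c j : descent D K W c j -> K \subset 'C(D) ->
  #|B| <= m`! ^ m.
Proof.
case=> _ _ sKB leB sWP cWK Bc _ _ leT sPWD cDK.
have K1 : K :=: 1.
  apply/trivgP; rewrite -faithB subsetI sKB (subset_trans _ (centS sPWD)) //.
  by rewrite cent_gen centU subsetI cWK.
have lt_j_m : j < m.
  apply: leq_trans (ltn_expl j (ltnSn 1)) _; apply: leq_trans (commB Bc).
  apply: leq_trans (leq_trans _ leT) (subset_leq_card _).
    by rewrite leq_pmulr ?cardG_gt0.
  by rewrite commgSS ?sub1set ?cycle_id.
apply: leq_trans leB _; rewrite K1 cards1 mul1n leq_pexp2l ?fact_gt0 //.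
exact: ltnW.
Qed.

Section DescentStep.

Variables (D K : {group gT}) (W : {set gT}) (c b : gT) (j : nat).
Hypotheses (dD : descent D K W c j) (Kb : b \in K) (ncDb : b \notin 'C(D)).

Let N := [~: D, <[b]>].
Let Bb : b \in B := subsetP (descent_subB dD) b Kb.
Let nDb : b \in 'N(D) := subsetP (descent_norm dD) b Bb.
Let sND : N \subset D. Proof. by rewrite commg_subl cycle_subG. Qed.

Let nNB : B \subset 'N(N).
Proof.
rewrite normsR ?(descent_norm dD) // cents_norm // cent_cycle sub_cent1.
exact: subsetP cBB b Bb.
Qed.

Let conj_Wcb : {in W, forall w, w ^ (c * b) = w ^ c}.
Proof.
move=> w Ww; have cWb := subsetP (descent_centW dD) b Kb.
by rewrite conjgM /conjg -(centP cWb) ?mulKg ?(descent_stableW dD).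
Qed.

Let conj_Ncb : {in N, forall x, x ^ (c * b) = x ^ b}.
Proof.
move=> x Nx; have cDc := descent_centD dD.
by rewrite conjgM {2}/conjg -(centP cDc) ?mulKg ?(subsetP sND).
Qed.

Lemma descent_step_card : #|B| <= #|'C_K(N)| * m`! ^ j.+1.
Proof.
apply: leq_trans (descent_card dD) _.
rewrite -(Lagrange (subsetIl K 'C(N))) expnS mulnA.
rewrite leq_mul // leq_mul //; apply: leq_trans (index_cent_leq_fact _) _.
  exact: subset_trans (descent_subB dD) nNB.
apply: leq_fact; apply: leq_trans (commB Bb).
by rewrite subset_leq_card ?commSg ?(descent_subP dD).
Qed.

Lemma descent_step_commg :
  2 ^ j.+1 * #|[~: W :|: N, [set c * b]] :&: 'C_D[b]|
    <= #|[~: W :|: N, [set c * b]]|.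
Proof.
have pD : p.-group D := pgroupS (descent_subP dD) pP.
have [x Nx ncxb] := exists_commg_noncent1 pD nDb (mem_p_elt p'B Bb) ncDb.
apply: (card_setI_halving (T := [~: W, [set c]]%G) (z := [~ x, b])).
- rewrite gen_subG; apply/subsetP=> _ /imset2P[w _ Ww /set1P-> ->].
  by rewrite commgEl -conj_Wcb // -commgEl mem_commg ?set11 ?inE ?Ww.
- exact: subsetIl.
- have xcb : [~ x, c * b] = [~ x, b] by rewrite !commgEl conj_Ncb.
  rewrite inE -{1}xcb mem_commg ?set11 ?inE ?Nx ?orbT //=.
  by rewrite (subsetP sND) // mem_commg ?cycle_id ?(subsetP sND x Nx).
- by apply: contra ncxb => /setIP[].
- exact: descent_commg dD.
Qed.

Lemma descent_step_gen : P \subset <<(W :|: N) :|: 'C_D[b]>>.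
Proof.
have pD : p.-group D := pgroupS (descent_subP dD) pP.
have coDb : coprime #|D| #|<[b]>|.
  by rewrite -orderE; apply: pnat_coprime pD (mem_p_elt p'B Bb).
have nDb' : <[b]> \subset 'N(D) by rewrite cycle_subG.
have := coprime_commg_cent_mul nDb' coDb (pgroup_sol pD).
rewrite cent_cycle -/N => sDNC.
apply: subset_trans (descent_gen dD) _; rewrite gen_subG subUset.
rewrite sub_gen ?(subset_trans (subsetUl W N) (subsetUl _ _)) //=.
apply: subset_trans sDNC _; rewrite mul_subG // sub_gen ?subsetUr //.
exact: subset_trans (subsetUr W N) (subsetUl _ _).
Qed.

Lemma descent_step : descent 'C_D[b] 'C_K(N) (W :|: N) (c * b) j.+1.
Proof.
case: dD => sDP nDB sKB _ sWP cWK Bc stWc cDc _ _.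
split.
- exact: subset_trans (subsetIl _ _) sDP.
- rewrite normsI // (subset_trans _ (normG 'C[b]%G)) //.
  by rewrite sub_cent1 (subsetP cBB).
- exact: subset_trans (subsetIl _ _) sKB.
- exact: descent_step_card.
- by rewrite subUset sWP (subset_trans sND).
- by rewrite centU subsetI subsetIr (subset_trans (subsetIl _ _)).
- by rewrite groupM.
- move=> y /setUP[Wy | Ny]; first by rewrite inE conj_Wcb ?stWc.
  by rewrite inE conj_Ncb // (memJ_norm _ (subsetP nNB b Bb)) Ny orbT.
- rewrite groupM ?(subsetP (centS (subsetIl D _)) c cDc) //.
  by rewrite -sub_cent1 subsetIr.
- exact: descent_step_commg.
- exact: descent_step_gen.
Qed.

End DescentStep.

Lemma card_abelian_coprime_faithful : #|B| <= m`! ^ m.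
Proof.
suff bound n (D K : {group gT}) (W : {set gT}) c j :
    #|D| < n -> descent D K W c j -> #|B| <= m`! ^ m.
  exact: (bound _ P B set0 1 0 (ltnSn _) descent_init).
elim: n D K W c j => // n IHn D K W c j ltDn dD.
have [cDK | /subsetPn[b Kb ncDb]] := boolP (K \subset 'C(D)).
  exact: descent_stop dD cDK.
apply: IHn (descent_step dD Kb ncDb); apply: leq_trans (ltnSE ltDn).
rewrite proper_card // properE subsetIl; apply: contra ncDb => sDC.
by rewrite -sub_cent1 (subset_trans sDC) ?subsetIr.
Qed.

End AbelianCoprimeAction.

Section AbelianBounded.

Variable gT : finGroupType.
Implicit Types (k q : nat) (S X Y : {group gT}).

Definition abelian_bounded (X : {set gT}) k :=
  forall Y, Y \subset X -> abelian Y -> #|Y| <= k.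

Lemma abelian_boundedS X Y k : Y \subset X -> abelian_bounded X k ->
  abelian_bounded Y k.
Proof. by move=> sYX bX Z sZY; apply: bX; apply: subset_trans sZY sYX. Qed.

Lemma abelian_bounded_pgroup_card q S k : q.-group S -> abelian_bounded S k ->
  #|S| <= k * k`!.
Proof.
move=> qS bS.
have [Z maxZ _] :
    {Z : {group gT} | [max Z | (Z <| S) && abelian Z] & 1%G \subset Z}.
  by apply: maxgroup_exists; rewrite normal1 abelian1.
have /SCN_P[nsZS cSZ] := max_SCN qS maxZ.
have sZS := normal_sub nsZS.
have leZ : #|Z| <= k by apply: bS; last by case/andP: (maxgroupp maxZ).
rewrite -(Lagrange sZS) leq_mul // -{1}cSZ.
exact: leq_trans (index_cent_leq_fact (normal_norm nsZS)) (leq_fact leZ).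
Qed.

Lemma abelian_bounded_card X k : abelian_bounded X k ->
  #|X| <= (k * k`!) ^ k.+1.
Proof.
move=> bX; pose pi := [pred q | q < k.+1].
have piX : pi.-nat #|X|.
  apply/pnatP=> // q q_pr /(Cauchy q_pr)[x Xx <-].
  by rewrite inE ltnS orderE bX ?cycle_abelian ?cycle_subG.
rewrite -(part_pnat_id piX) (widen_partn _ (leq_addr k #|X|)).
rewrite -(big_nat_widen _ _ _ predT) ?ltnS ?leq_addl //.
rewrite -[k.+1 in X in _ <= X](subn0 k.+1) -prod_nat_const_nat.
apply: leq_prod => q _; have [S sylS] := Sylow_exists q X.
rewrite -p_part -(card_Hall sylS).
apply: abelian_bounded_pgroup_card (pHall_pgroup sylS) _.
exact: abelian_boundedS (pHall_sub sylS) bX.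
Qed.

End AbelianBounded.

Section CommutatorCard.

Variables (gT : finGroupType) (P : {group gT}).

Lemma card_commg_setU1 (A : {set gT}) a : a \in 'N(P) ->
  #|[~: P, a |: A]| <= #|[~: P, [set a]]| * #|[~: P, A]|.
Proof.
move=> nPa; set H := [~: P, [set a]]; set K := [~: P, A].
have nKH : H \subset 'N(K).
  apply: subset_trans (commg_norml P A).
  by rewrite /H -commg_cycle // commg_subl cycle_subG.
apply: (@leq_trans #|H * K|); last by rewrite mul_cardG leq_pmulr ?cardG_gt0.
rewrite subset_leq_card // -norm_joinEl // gen_subG.
apply/subsetP=> _ /imset2P[x y Px /setU1P[-> | Ay] ->].
  by rewrite mem_gen // inE mem_commg ?set11.
by rewrite mem_gen // inE (mem_commg Px Ay) orbT.
Qed.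

Lemma card_commg_leq_pow (A : {set gT}) m : A \subset 'N(P) ->
  (forall a, a \in A -> #|[~: P, [set a]]| <= m) -> #|[~: P, A]| <= m ^ #|A|.
Proof.
elim: {A}_.+1 {-2}A (ltnSn #|A|) => // n IHn A leAn nPA bA.
have [-> | [a Aa]] := set_0Vmem A.
  rewrite cards0 (commG1P _) ?cards1 //.
  by rewrite (subset_trans (cents1 P)) ?centS ?sub0set.
rewrite -(setD1K Aa) cardsU1 !inE eqxx /= expnS.
apply: leq_trans (card_commg_setU1 _ (subsetP nPA a Aa)) _.
rewrite leq_mul ?bA //; apply: IHn; last by move=> b /setD1P[_ /bA].
  by rewrite -ltnS (leq_trans _ leAn) // (cardsD1 a A) Aa.
exact: subset_trans (subsetDl A _) nPA.
Qed.

End CommutatorCard.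

Definition order_bound m := let k := (m`! ^ m)%N in ((k * k`!) ^ k.+1)%N.

Lemma card_coprime_faithful_action (gT : finGroupType) (p : nat)
    (P A : {group gT}) m :
    p.-group P -> p^'.-group A -> A \subset 'N(P) -> 'C_A(P) = 1 ->
    (forall a, a \in A -> #|[~: P, [set a]]| <= m) ->
  #|A| <= order_bound m.
Proof.
move=> pP p'A nPA faithA bA; apply: abelian_bounded_card => Y sYA cYY.
apply: (card_abelian_coprime_faithful pP (pgroupS sYA p'A) cYY).
- exact: subset_trans sYA nPA.
- by apply/trivgP; rewrite -faithA setSI.
- move=> c Yc; rewrite commg_cycle ?bA ?(subsetP sYA) //.
  exact: subsetP nPA c (subsetP sYA c Yc).
Qed.

Section AutSemidirect.

Variables (gT : finGroupType) (P : {group gT}).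
Local Notation to := (aut_groupAction P).
Local Notation inP := (sdpair1 to).
Local Notation inA := (sdpair2 to).

Lemma commAut_set1 a : commAut P a = commAutS P [set a].
Proof. by rewrite /commAut /commAutS imset2_set1r. Qed.

Lemma commAutS_sub (A : {set {perm gT}}) :
  A \subset Aut P -> commAutS P A \subset P.
Proof.
move=> sAAut; rewrite gen_subG; apply/subsetP=> _ /imset2P[x a Px Aa ->].
by rewrite groupM ?groupV ?Aut_closed ?(subsetP sAAut).
Qed.

Lemma morphim_commAutS (A : {set {perm gT}}) : A \subset Aut P ->
  inP @* commAutS P A = [~: inP @* P, inA @* A].
Proof.
move=> sAAut; have sAutA := subsetP sAAut.
have commE x a : x \in P -> a \in A -> inP (x^-1 * a x) = [~ inP x, inA a].
  move=> Px Aa; rewrite morphM ?groupV ?Aut_closed ?sAutA // morphV //.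
  by congr (_ * _); rewrite -sdpair_act ?sAutA.
rewrite morphim_gen ?(subset_trans (subset_gen _) (commAutS_sub sAAut)) //.
congr <<_>>; apply/setP=> u; apply/idP/idP.
  case/morphimP=> _ _ /imset2P[x a Px Aa ->] ->.
  apply/imset2P; exists (inP x) (inA a); rewrite ?mem_morphim ?sAutA //.
  exact: commE.
case/imset2P=> _ _ /morphimP[x _ Px ->] /morphimP[a _ Aa ->] ->.
rewrite -commE // mem_morphim //; last by apply/imset2P; exists x a.
by rewrite groupM ?groupV ?Aut_closed ?sAutA.
Qed.

Lemma im_sdpair_aut_faithful (A : {group {perm gT}}) : A \subset Aut P ->
  'C_(inA @* A)(inP @* P) = 1.
Proof.
move=> sAAut; apply/trivgP/subsetP=> _ /setIP[/morphimP[a _ Aa ->] cPa].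
have AutPa := subsetP sAAut a Aa.
rewrite inE (_ : a = 1) ?morph1 //; apply/permP=> x; rewrite perm1.
have [Px | P'x] := boolP (x \in P); last first.
  by apply: out_perm P'x; case/setIdP: AutPa.
apply: (injmP (injm_sdpair1 to)); rewrite ?Aut_closed //=.
rewrite -[a x]/(to x a) sdpair_act // /conjg -(centP cPa) ?mulKg //.
exact: mem_morphim.
Qed.

End AutSemidirect.

Theorem lemma2p4 :
  exists f : nat -> nat,
    forall (p : nat) (gT : finGroupType) (P : {group gT}) (m : nat)
           (A : {group {perm gT}}),
      prime p -> p.-group P -> (0 < m)%N ->
      A \subset Aut P -> p^'.-group A ->
      (forall a, a \in A -> (#|commAut P a| <= m)%N) ->
      (#|A| <= f m)%N /\ (#|commAutS P A| <= f m)%N.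
Proof.
exists (fun m => order_bound m + m ^ order_bound m)%N.
move=> p gT P m A _ pP m_gt0 sAAut p'A bA.
pose to := aut_groupAction P.
set P' := sdpair1 to @* P; set A' := sdpair2 to @* A.
have cardA' : #|A'| = #|A| := card_injm (injm_sdpair2 to) sAAut.
have card_comm (S : {set {perm gT}}) :
  S \subset Aut P -> #|[~: P', sdpair2 to @* S]| = #|commAutS P S|.
  move=> sSAut; rewrite -morphim_commAutS //.
  by rewrite card_injm ?injm_sdpair1 ?commAutS_sub.
have nP'A' : A' \subset 'N(P').
  exact: subset_trans (morphimS _ sAAut) (im_sdpair_norm to).
have bA' u : u \in A' -> #|[~: P', [set u]]| <= m.
  case/morphimP=> a _ Aa ->; have AutPa := subsetP sAAut a Aa.
  by rewrite -morphim_set1 // card_comm ?sub1set // -commAut_set1 bA.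
have leA : #|A| <= order_bound m.
  rewrite -cardA'; apply: card_coprime_faithful_action bA' => //.
  - exact: morphim_pgroup pP.
  - exact: morphim_pgroup p'A.
  - exact: im_sdpair_aut_faithful sAAut.
split; first exact: leq_trans leA (leq_addr _ _).
rewrite -card_comm //; apply: leq_trans (card_commg_leq_pow nP'A' bA') _.
by rewrite cardA' (leq_trans _ (leq_addl _ _)) // leq_pexp2l.
Qed.
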